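(* Let $q\ge2$ and $n\ge3$ be integers, and let $\mathcal{A}\subseteq\mathcal{N}_{q,n}$ with $|\mathcal{A}|\ge3^{q-1}$. Then $$\min_{\mathbf{t},\mathbf{t}'\in\mathcal{A},\ \mathbf{t}\ne\mathbf{t}'}d_{\mathrm c}(\mathbf{t},\mathbf{t}')\le2(q-1)\frac{n}{|\mathcal{A}|^{1/(q-1)}}.$$
   Context: $\mathcal{N}_{q,n}=\{\mathbf{t}\in\mathbb{Z}_{\ge0}^q:\sum_{i=1}^qt_i=n\}$; $d_{\mathrm c}(\mathbf{t},\mathbf{t}')=\frac12\sum_{i=1}^q|t_i-t_i'|$. *)

From mathcomp Require Import all_boot.
From Stdlib Require Import Reals.
Set Implicit Arguments. Unset Strict Implicit. Unset Printing Implicit Defensive.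

Definition vec (q n : nat) := {ffun 'I_q -> 'I_n.+1}.

Definition in_N (q n : nat) (t : vec q n) : bool :=
  (\sum_(i < q) (t i : nat)) == n.

Definition l1dist (q n : nat) (t t' : vec q n) : nat :=
  \sum_(i < q) (((t i : nat) - t' i) + ((t' i : nat) - t i)).

Definition dc (q n : nat) (t t' : vec q n) : R :=
  (INR (l1dist t t') / 2)%R.

From mathcomp Require Import all_boot.
From Stdlib Require Import Reals Lia Lra.
From mathcomp Require Import zify.

Set Implicit Arguments.
Unset Strict Implicit.
Unset Printing Implicit Defensive.

(* Write q = k + 1 and let s be the largest integer with s^k < |A|, so that
   |A| <= (s+1)^k.  Cut [0, n] into s intervals of length n/s + 1 and sort each
   t in A into the box given by the intervals of its first k coordinates.
   There are s^k < |A| boxes, so two distinct t, t' share a box: their first k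
   coordinates differ by at most n/s each, and since both vectors sum to n the
   last coordinate differs by at most the sum of those.  Hence
   d_c(t, t') <= k n/s <= 2 k n/(s+1) <= 2 k n/|A|^(1/k). *)

Definition absdiff (a b : nat) := (a - b) + (b - a).

Lemma absdiff_sum_le {I : Type} (r : seq I) (F G : I -> nat) :
  absdiff (\sum_(i <- r) F i) (\sum_(i <- r) G i)
  <= \sum_(i <- r) absdiff (F i) (G i).
Proof.
rewrite /absdiff; elim: r => [|x r IH]; first by rewrite !big_nil.
rewrite !big_cons; lia.
Qed.

Lemma absdiff_lt_of_divn_eq a a' b :
  0 < b -> a %/ b = a' %/ b -> absdiff a a' < b.
Proof.
move=> b_gt0 eq_div; rewrite /absdiff.
have := divn_eq a b; have := divn_eq a' b.
have := ltn_pmod a b_gt0; have := ltn_pmod a' b_gt0.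
rewrite eq_div; lia.
Qed.

Lemma sum_absdiff_ord_recr_le k (u v : 'I_k.+1 -> nat) :
  \sum_(i < k.+1) u i = \sum_(i < k.+1) v i ->
  \sum_(i < k.+1) absdiff (u i) (v i)
  <= 2 * \sum_(i < k) absdiff (u (widen_ord (leqnSn k) i)) (v (widen_ord (leqnSn k) i)).
Proof.
have := absdiff_sum_le (index_enum 'I_k)
  (fun i => u (widen_ord (leqnSn k) i)) (fun i => v (widen_ord (leqnSn k) i)).
rewrite !big_ord_recr /=.
move: (\sum_(i < k) absdiff _ _) (\sum_(i < k) u _) (\sum_(i < k) v _) => D U V.
rewrite /absdiff; lia.
Qed.

Lemma exists_two_in_fiber (T U : finType) (f : T -> U) (A : {set T}) :
  #|U| < #|A| -> exists t t', [/\ t \in A, t' \in A, t != t' & f t = f t'].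
Proof.
move=> card_lt.
have /dinjectivePn[t tA [t' /andP[t't t'A] eq_f]] : ~~ dinjectiveb f A.
  apply: contraTN card_lt => /dinjectiveP/card_in_imset <-.
  by rewrite -leqNgt max_card.
by exists t, t'; split; rewrite // eq_sym.
Qed.

Lemma exists_expn_bracket k m :
  0 < k -> 1 < m -> exists s, expn s.+1 k < m <= expn s.+2 k.
Proof.
move=> k_gt0 m_gt1.
have P0 : exists s, expn s.+1 k < m by exists 0; rewrite exp1n.
have Pbound s : expn s.+1 k < m -> s <= m.
  move=> lt_m; apply: ltnW; apply: leq_ltn_trans lt_m.
  by apply: leq_trans (leq_pexp2l _ k_gt0); rewrite ?expn1.
case: (ex_maxnP P0 Pbound) => s lt_m s_max.
by exists s; rewrite lt_m leqNgt; apply/negP => /s_max; rewrite ltnn.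
Qed.

Section Boxes.

Variables (k n s : nat).

Let w := widen_ord (leqnSn k).

Definition box (t : vec k.+1 n) : {ffun 'I_k -> 'I_s.+1} :=
  [ffun i => inord (t (w i) %/ (n %/ s.+1).+1)].

Lemma box_eq_absdiff_le (t t' : vec k.+1 n) (i : 'I_k) :
  box t = box t' -> absdiff (t (w i)) (t' (w i)) <= n %/ s.+1.
Proof.
have lt_s (a : 'I_n.+1) : a %/ (n %/ s.+1).+1 < s.+1.
  rewrite ltn_divLR // mulnC; apply: leq_trans (ltn_ceil n (ltn0Sn s)).
  by rewrite ltnS -ltnS ltn_ord.
move=> /(congr1 (fun f : {ffun 'I_k -> 'I_s.+1} => nat_of_ord (f i))).
by rewrite !ffunE !inordK ?lt_s // => /absdiff_lt_of_divn_eq; apply.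
Qed.

Lemma l1dist_box_eq_le (t t' : vec k.+1 n) :
  in_N t -> in_N t' -> box t = box t' -> l1dist t t' <= 2 * (k * (n %/ s.+1)).
Proof.
move=> /eqP sum_t /eqP sum_t' eq_box.
have l1dist_le : l1dist t t' <= 2 * \sum_(i < k) absdiff (t (w i)) (t' (w i)).
  exact: sum_absdiff_ord_recr_le (etrans sum_t (esym sum_t')).
apply: leq_trans l1dist_le _; rewrite leq_mul2l; apply/orP; right.
apply: leq_trans (leq_sum _ (fun i _ => box_eq_absdiff_le i eq_box)) _.
by rewrite big_const_ord iter_addn_0 mulnC.
Qed.

End Boxes.

(* Since Reals is imported after MathComp, [^] in the statement is [Nat.pow]. *)
Lemma natpowE a k : Nat.pow a k = expn a k.
Proof. by elim: k => [|k IH] //=; rewrite expnS IH. Qed.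

Lemma INR_gt0 j : 0 < j -> (0 < INR j)%R.
Proof. by move=> /ltP; apply: lt_0_INR. Qed.

Lemma Rpower_inv_le k m c :
  0 < k -> 0 < m -> m <= expn c k -> (Rpower (INR m) (/ INR k) <= INR c)%R.
Proof.
move=> k_gt0 m_gt0 le_m.
have c_gt0 : 0 < c by case: c le_m => //; rewrite exp0n //; lia.
have -> : INR c = Rpower (INR (expn c k)) (/ INR k).
  rewrite -natpowE pow_INR -Rpower_pow; last exact: INR_gt0.
  rewrite Rpower_mult Rinv_r ?Rpower_1 //; first exact: INR_gt0.
  by apply: not_0_INR; lia.
apply: Rle_Rpower_l; first by left; apply/Rinv_0_lt_compat/INR_gt0.
by split; [apply: INR_gt0 | apply/le_INR/leP].
Qed.

Lemma half_le_div_Rpower k m c n l :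
  0 < k -> 0 < m -> m <= expn c.+1 k -> l <= 2 * (k * (n %/ c)) ->
  (INR l / 2 <= 2 * INR k * INR n / Rpower (INR m) (/ INR k))%R.
Proof.
move=> k_gt0 m_gt0 le_m le_l.
set x := Rpower _ _.
have x_gt0 : (0 < x)%R by apply: exp_pos.
have le_x : (x <= INR c.+1)%R by apply: Rpower_inv_le.
have le_half : (INR l / 2 <= INR (k * (n %/ c)))%R.
  have := le_INR _ _ (elimT leP le_l); rewrite mult_INR /=; lra.
have le_mul : (INR (k * (n %/ c)) * INR c.+1 <= 2 * INR k * INR n)%R.
  have le_nat : k * (n %/ c) * c.+1 <= 2 * k * n.
    have := leq_divM n c; have := leq_div n c; nia.
  by have := le_INR _ _ (elimT leP le_nat); rewrite !mult_INR.
apply: (Rle_trans _ _ _ le_half); rewrite /Rdiv.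
apply: (Rmult_le_reg_r x) => //; rewrite Rmult_assoc Rinv_l ?Rmult_1_r; last lra.
have := pos_INR (k * (n %/ c)); nra.
Qed.

Theorem lemma17 (q n : nat) (A : {set vec q n}) :
  2 <= q -> 3 <= n ->
  {subset A <= [pred t | in_N t]} ->
  3 ^ (q - 1) <= #|A| ->
  exists t t', [/\ t \in A, t' \in A, t != t' &
    (dc t t' <= 2 * INR (q - 1) * INR n
                / Rpower (INR #|A|) (/ INR (q - 1)))%R].
Proof.
case: q A => [|k] A // q_ge2 _ A_N; rewrite subn1 /= natpowE => A_ge.
have k_gt0 : 0 < k by lia.
have A_gt1 : 1 < #|A|.
  by apply: leq_trans A_ge; rewrite -(exp1n k) ltn_exp2r.
have [s /andP[lt_A le_A]] := exists_expn_bracket k_gt0 A_gt1.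
have [t [t' [tA t'A neq_tt' eq_box]]] : exists t t',
    [/\ t \in A, t' \in A, t != t' & box s t = box s t'].
  by apply: exists_two_in_fiber; rewrite card_ffun !card_ord.
exists t, t'; split => //.
apply: (half_le_div_Rpower (c := s.+1)) => //; first exact: ltnW A_gt1.
exact: l1dist_box_eq_le (A_N t tA) (A_N t' t'A) eq_box.
Qed.
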